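(* For every $r\in\mathbb N$ and every $s>0$, the Hardy–Steklov-type operator $\mathcal P_r(s)$ maps $\mathbf E$ into $\mathbf E^{r}$.
   Context: Let $G=\mathbb R_+\times\mathbb R$ be the ''$ax+b$'' group with multiplication $(a_1,b_1)(a_2,b_2)=(a_1a_2,\,a_1b_2+b_1)$. Let $T$ be a strongly continuous representation of $G$ in a Banach space $\mathbf E$ with $\|T(g)f\|_{\mathbf E}\le\|f\|_{\mathbf E}$. Put $T_1(t)=T(e^{t},0)$, $T_2(t)=T(1,t)$, with (closed) generators $\mathbb A_1,\mathbb A_2$. For $r\in\mathbb N$, $\mathbf E^{r}$ is the space of $f\in\mathbf E$ for which all products $\mathbb A_{j_1}\cdots\mathbb A_{j_k}f$, $1\le k\le r$, $j_i\in\{1,2\}$, are defined (with the norm $\|f\|_{\mathbf E}+\sum_{k=1}^r\sum_{(j_1,\dots,j_k)}\|\mathbb A_{j_1}\cdots\mathbb A_{j_k}f\|_{\mathbf E}$). For $s>0$, $r\in\mathbb N$ and $f\in\mathbf E$, $$\mathcal P_r(s)f=(s/r)^{-2r}\int_{[0,s/r]^{2r}}T_1(t_{1,1}+\dots+t_{1,r})\,T_2(t_{2,1}+\dots+t_{2,r})f\;dt_{1,1}\cdots dt_{1,r}\,dt_{2,1}\cdots dt_{2,r}$$ (Bochner integral). *)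

From Stdlib Require Import Reals Lra List.
From Coquelicot Require Import Coquelicot.
Open Scope R_scope.

Section Defs.
Variable E : CompleteNormedModule R_AbsRing.

(* Representation of the ax+b group: T a b is the operator T(a,b), a > 0. *)
Definition is_contr_rep (T : R -> R -> E -> E) : Prop :=
  (forall a b, 0 < a -> forall f h, T a b (plus f h) = plus (T a b f) (T a b h)) /\
  (forall a b, 0 < a -> forall (c : R) f, T a b (scal c f) = scal c (T a b f)) /\
  (forall f, T 1 0 f = f) /\
  (forall a1 b1 a2 b2 f, 0 < a1 -> 0 < a2 ->
      T a1 b1 (T a2 b2 f) = T (a1 * a2) (a1 * b2 + b1) f) /\
  (forall f a b, 0 < a ->
      filterlim (fun p : R * R => T (fst p) (snd p) f) (locally (a, b)) (locally (T a b f))) /\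
  (forall a b f, 0 < a -> norm (T a b f) <= norm f).

Definition T1 (T : R -> R -> E -> E) (t : R) : E -> E := T (exp t) 0.
Definition T2 (T : R -> R -> E -> E) (t : R) : E -> E := T 1 t.

(* Graph of the (closed) generator of a one-parameter semigroup S:
   f is in the domain and A f = g iff (S(t) f - f)/t -> g as t -> 0+. *)
Definition gen (S : R -> E -> E) (f g : E) : Prop :=
  filterlim (fun t => scal (/ t) (minus (S t f) f)) (at_right 0) (locally g).

Definition genj (T : R -> R -> E -> E) (j : bool) : E -> E -> Prop :=
  if j then gen (T2 T) else gen (T1 T).

(* applies T [j1; ...; jk] f g  :<->  A_{j1} ... A_{jk} f is defined and = g. *)
Fixpoint applies (T : R -> R -> E -> E) (w : list bool) (f g : E) : Prop :=
  match w with
  | nil => g = f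
  | j :: w' => exists h, applies T w' f h /\ genj T j h g
  end.

Definition in_Er (T : R -> R -> E -> E) (r : nat) (f : E) : Prop :=
  forall w : list bool, (1 <= length w)%nat -> (length w <= r)%nat ->
    exists g, applies T w f g.

Fixpoint cube_int (n : nat) (c : R) (F : list R -> E) : E :=
  match n with
  | O => F nil
  | S n' => RInt (fun t => cube_int n' c (fun l => F (t :: l))) 0 c
  end.

Definition sumR (l : list R) : R := fold_right Rplus 0 l.

Definition P_op (T : R -> R -> E -> E) (r : nat) (s : R) (f : E) : E :=
  scal (/ ((s / INR r) ^ (2 * r)))
    (cube_int (2 * r) (s / INR r)
       (fun l => T1 T (sumR (firstn r l)) (T2 T (sumR (skipn r l)) f))).

End Defs.

(* With c = s/r, the cube integral factorises (T_j(a + t) = T_j(a) T_j(t)) and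
   P_r(s) f = c^(-2r) W_1^r W_2^r f, where W_j = int_0^c T_j(t) dt.  For a strongly
   continuous contraction group U with generator A, differentiating
   U(z) int_0^c e^(-mu) U(u) x du = e^(mz) int_z^(c+z) e^(-mu) U(u) x du at z = 0 gives
   A int_0^c e^(-mu) U(u) x du = e^(-mc) U(c) x - x + m int_0^c e^(-mu) U(u) x du,
   so W_j adds one order of A_j-regularity.  The group law of ax+b gives
   A_2 T_1(u) = e^(-u) T_1(u) A_2, hence A_2 commutes with the damped integrals of T_1
   up to raising the damping exponent m; thus W_1 keeps the A_2-regularity built by W_2,
   and every word with at most r letters of each kind applies to W_1^r W_2^r f. *)

From Stdlib Require Import Reals List Bool Lra Lia.
From Coquelicot Require Import Coquelicot.
Open Scope R_scope.

Lemma minus_plus_cancel_l {G : AbelianGroup} (a b : G) : minus (plus a b) a = b.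
Proof. unfold minus. rewrite plus_comm, plus_assoc, plus_opp_l. apply plus_zero_l. Qed.

(* [1] and [0] are [IZR] literals, not syntactically [one] and [zero]. *)
Lemma scal_R1 {V : ModuleSpace R_Ring} (v : V) : scal 1 v = v.
Proof. exact (scal_one v). Qed.

Lemma scal_R0 {V : ModuleSpace R_Ring} (v : V) : scal 0 v = zero.
Proof. exact (scal_zero_l v). Qed.

Lemma Riemann_sum_linear {U V : NormedModule R_AbsRing} (L : U -> V) (f : R -> U) ptd :
  is_linear L -> L (Riemann_sum f ptd) = Riemann_sum (fun t => L (f t)) ptd.
Proof.
intros HL. induction ptd as [x0 | h ptd IH] using SF_cons_ind.
- exact (linear_zero L HL).
- rewrite !Riemann_sum_cons, (linear_plus L HL), (linear_scal L HL), IH. reflexivity.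
Qed.

Lemma is_RInt_linear {U V : NormedModule R_AbsRing} (L : U -> V) (f : R -> U) a b I :
  is_linear L -> is_RInt f a b I -> is_RInt (fun t => L (f t)) a b (L I).
Proof.
intros HL HI.
eapply filterlim_ext; [| eapply filterlim_comp; [exact HI | apply (linear_cont L), HL]].
intros ptd. simpl. rewrite (linear_scal L HL), (Riemann_sum_linear L f ptd HL). reflexivity.
Qed.

Lemma RInt_linear {U V : CompleteNormedModule R_AbsRing} (L : U -> V) (f : R -> U) a b :
  is_linear L -> ex_RInt f a b -> RInt (fun t => L (f t)) a b = L (RInt f a b).
Proof.
intros HL Hf. apply is_RInt_unique, is_RInt_linear; [exact HL | exact (RInt_correct f a b Hf)].
Qed.

Lemma minus_scal_linear {V : NormedModule R_AbsRing} (L : V -> V) (a b : R) (q y : V) :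
  is_linear L -> minus (scal a (L (scal b q))) (scal (a * b) (L y)) = scal a (L (scal b (minus q y))).
Proof.
intros HL.
rewrite (@scal_minus_distr_l R_AbsRing V), (linear_minus L _ _ HL), (linear_scal L HL b y),
  (@scal_minus_distr_l R_AbsRing V), (@scal_assoc R_AbsRing V).
reflexivity.
Qed.

Lemma norm_scal_nonneg {V : NormedModule R_AbsRing} (k : R) (v : V) :
  0 <= k -> norm (scal k v) <= k * norm v.
Proof.
intros Hk. eapply Rle_trans; [apply (@norm_scal R_AbsRing V)|].
change (Rabs k * norm v <= k * norm v). rewrite Rabs_pos_eq by exact Hk. lra.
Qed.

Lemma exp_le_1 x : x <= 0 -> exp x <= 1.
Proof.
intros Hx. rewrite <- exp_0.
destruct (Rle_lt_or_eq_dec x 0 Hx) as [Hlt | ->]; [left; apply exp_increasing, Hlt | right; reflexivity].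
Qed.

Lemma filterlim_at_right_0_scale (k : R) :
  0 < k -> filterlim (fun z => k * z) (at_right 0) (at_right 0).
Proof.
intros Hk P [d Hd].
assert (Hdk : 0 < d / k) by (apply Rdiv_lt_0_compat; [apply cond_pos | exact Hk]).
exists (mkposreal _ Hdk). intros z Hz Hz0. simpl in Hz.
change (Rabs (z - 0) < d / k) in Hz. rewrite Rminus_0_r, Rabs_pos_eq in Hz by lra.
apply Hd; [| apply Rmult_lt_0_compat; lra].
change (Rabs (k * z - 0) < d). rewrite Rminus_0_r, Rabs_pos_eq by nra.
apply (Rmult_lt_compat_l k) in Hz; [|exact Hk].
replace (k * (d / k)) with (pos d) in Hz by (field; lra). exact Hz.
Qed.

Lemma filterlim_at_right_0P {V : NormedModule R_AbsRing} (q : R -> V) (l : V) :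
  filterlim q (at_right 0) (locally l) <->
  forall eps : posreal, exists eta : posreal,
    forall t, 0 < t < eta -> norm (minus (q t) l) < eps.
Proof.
rewrite filterlim_locally_ball_norm.
split; intros H eps; destruct (H eps) as [eta Heta]; exists eta.
- intros t [Ht0 Hte]. apply Heta; [|exact Ht0].
  change (Rabs (t - 0) < eta). rewrite Rminus_0_r, Rabs_pos_eq; lra.
- intros t Hball Ht0. apply Heta. split; [exact Ht0|].
  change (Rabs (t - 0) < eta) in Hball. rewrite Rminus_0_r in Hball.
  apply Rabs_def2 in Hball. lra.
Qed.

Lemma is_derive_right_quotient {V : NormedModule R_AbsRing} (F : R -> V) (x : R) (l : V) :
  is_derive F x l ->
  filterlim (fun h => scal (/ h) (minus (F (x + h)) (F x))) (at_right 0) (locally l).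
Proof.
intros [_ Hd]. apply filterlim_at_right_0P. intros eps.
destruct (Hd x (fun P HP => HP) (pos_div_2 eps)) as [d Hdom].
exists d. intros t [Ht0 Htd].
assert (Hxt : @minus (AbsRing_NormedModule R_AbsRing) (x + t) x = t)
  by (unfold minus, plus, opp; simpl; ring).
assert (Hb : ball x d (x + t)).
{ change (Rabs (x + t - x) < d). replace (x + t - x) with t by ring. rewrite Rabs_pos_eq; lra. }
specialize (Hdom _ Hb). simpl in Hdom. rewrite Hxt in Hdom.
change (norm t) with (Rabs t) in Hdom. rewrite Rabs_pos_eq in Hdom by lra.
apply Rle_lt_trans with (norm (scal (/ t) (minus (minus (F (x + t)) (F x)) (scal t l)))).
{ right. apply f_equal.
  rewrite (scal_minus_distr_l (/ t) (minus (F (x + t)) (F x))), scal_assoc.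
  replace (mult (/ t) t) with (@one R_Ring) by (change (1 = / t * t); field; lra).
  rewrite scal_one. reflexivity. }
eapply Rle_lt_trans; [apply norm_scal_nonneg; left; apply Rinv_0_lt_compat; lra|].
apply Rle_lt_trans with (/ t * (eps / 2 * t)).
- apply Rmult_le_compat_l; [left; apply Rinv_0_lt_compat; lra | exact Hdom].
- replace (/ t * (eps / 2 * t)) with (eps / 2) by (field; lra).
  destruct eps; simpl; lra.
Qed.

Lemma is_derive_scal_fct {V : NormedModule R_AbsRing} (f : R -> R) (g : R -> V) x df dg :
  is_derive f x df -> is_derive g x dg ->
  is_derive (fun t => scal (f t) (g t)) x (plus (scal df (g x)) (scal (f x) dg)).
Proof.
intros Hf Hg. unfold is_derive.
eapply filterdiff_ext_lin.
- apply (filterdiff_scal_fct x f g); [intros; apply Rmult_comm | exact Hf | exact Hg].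
- intros y. simpl. rewrite scal_distr_l, !scal_assoc.
  f_equal; f_equal; apply Rmult_comm.
Qed.

Section OneParameterGroup.
Variable E : CompleteNormedModule R_AbsRing.

Definition diff_quot (U : R -> E -> E) (t : R) (f : E) : E := scal (/ t) (minus (U t f) f).

Lemma is_linear_diff_quot (U : R -> E -> E) t :
  is_linear (U t) -> is_linear (diff_quot U t).
Proof.
intros HU.
apply (is_linear_comp (fun f => minus (U t f) f) (fun v => scal (/ t) v));
  [| exact (@is_linear_scal_r R_AbsRing E (/ t) Rmult_comm)].
apply (is_linear_comp (fun f => (U t f, opp f)) (fun p => plus (fst p) (snd p))).
- apply is_linear_prod; [exact HU | apply is_linear_opp].
- apply is_linear_plus.
Qed.

Lemma gen_linear_comm (U : R -> E -> E) (L : E -> E) f g :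
  is_linear L -> (forall t h, U t (L h) = L (U t h)) -> gen E U f g -> gen E U (L f) (L g).
Proof.
intros HL Hcomm H. unfold gen in *.
eapply filterlim_ext; [| eapply filterlim_comp; [exact H | apply (linear_cont L), HL]].
intros t. simpl. rewrite Hcomm, (linear_scal L HL), (linear_minus L _ _ HL). reflexivity.
Qed.

Lemma gen_plus (U : R -> E -> E) f g f' g' :
  (forall t, is_linear (U t)) -> gen E U f g -> gen E U f' g' -> gen E U (plus f f') (plus g g').
Proof.
intros HU H H'. unfold gen in *.
eapply filterlim_ext;
  [| eapply filterlim_comp_2; [exact H | exact H' | exact (@filterlim_plus R_AbsRing E g g')]].
intros t. symmetry. exact (linear_plus _ (is_linear_diff_quot U t (HU t)) f f').
Qed.

Lemma gen_scal (U : R -> E -> E) (k : R) f g :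
  (forall t, is_linear (U t)) -> gen E U f g -> gen E U (scal k f) (scal k g).
Proof.
intros HU. apply gen_linear_comm.
- exact (@is_linear_scal_r R_AbsRing E k Rmult_comm).
- intros t h. exact (linear_scal _ (HU t) k h).
Qed.

Lemma gen_unique (U : R -> E -> E) f g g' : gen E U f g -> gen E U f g' -> g = g'.
Proof. exact (@filterlim_locally_unique R R_AbsRing E (at_right 0) _ _ g g'). Qed.

Record one_param_group (U : R -> E -> E) : Prop := {
  opg_linear : forall t, is_linear (U t);
  opg_zero : forall f, U 0 f = f;
  opg_add : forall s t f, U s (U t f) = U (s + t) f;
  opg_cont : forall f t, continuous (fun t => U t f) t }.

Definition damped_int (U : R -> E -> E) (m c : R) (x : E) : E :=
  RInt (fun u => scal (exp (- (m * u))) (U u x)) 0 c.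

Section Group.
Variable U : R -> E -> E.
Hypothesis HU : one_param_group U.

Lemma opg_comm t a h : U t (U a h) = U a (U t h).
Proof. rewrite !(opg_add _ HU). f_equal. ring. Qed.

Lemma continuous_damped_orbit m x u : continuous (fun u => scal (exp (- (m * u))) (U u x)) u.
Proof.
apply (continuous_scal (fun u => exp (- (m * u))) (fun u => U u x)).
- apply (ex_derive_continuous (fun u => exp (- (m * u)))). auto_derive. exact I.
- apply (opg_cont _ HU).
Qed.

Lemma ex_RInt_damped_orbit m x a b : ex_RInt (fun u => scal (exp (- (m * u))) (U u x)) a b.
Proof. apply ex_RInt_continuous. intros z _. apply continuous_damped_orbit. Qed.

Lemma damped_int_0 c x : damped_int U 0 c x = RInt (fun u => U u x) 0 c.
Proof. apply RInt_ext. intros u _. rewrite Rmult_0_l, Ropp_0, exp_0. apply scal_R1. Qed.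

Lemma damped_int_shift m c x z :
  U z (damped_int U m c x) =
  scal (exp (m * z)) (minus (RInt (fun u => scal (exp (- (m * u))) (U u x)) 0 (c + z))
                            (RInt (fun u => scal (exp (- (m * u))) (U u x)) 0 z)).
Proof.
set (phi := fun u => scal (exp (- (m * u))) (U u x)).
unfold damped_int. fold phi.
rewrite <- (RInt_linear (U z) phi 0 c (opg_linear _ HU z) (ex_RInt_damped_orbit m x 0 c)).
transitivity (RInt (fun u => scal (exp (m * z)) (scal 1 (phi (1 * u + z)))) 0 c).
{ apply RInt_ext. intros u _. unfold phi.
  rewrite (linear_scal _ (opg_linear _ HU z)), (opg_add _ HU), !scal_assoc.
  replace (1 * u + z) with (z + u) by ring. f_equal.
  change (exp (- (m * u)) = exp (m * z) * 1 * exp (- (m * (z + u)))).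
  rewrite Rmult_1_r, <- exp_plus. f_equal. ring. }
rewrite (RInt_scal (fun u => scal 1 (phi (1 * u + z))) 0 c (exp (m * z)))
  by exact (ex_RInt_comp_lin phi 1 z 0 c (ex_RInt_damped_orbit m x _ _)).
rewrite (RInt_comp_lin phi 1 z 0 c) by exact (ex_RInt_damped_orbit m x _ _).
f_equal. replace (1 * 0 + z) with z by ring. replace (1 * c + z) with (c + z) by ring.
rewrite <- (RInt_Chasles phi 0 z (c + z)) by apply ex_RInt_damped_orbit.
symmetry. exact (minus_plus_cancel_l _ _).
Qed.

Lemma gen_damped_int m c x :
  gen E U (damped_int U m c x)
    (plus (minus (scal (exp (- (m * c))) (U c x)) x) (scal m (damped_int U m c x))).
Proof.
set (phi := fun u => scal (exp (- (m * u))) (U u x)).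
set (Psi := fun z => RInt phi 0 z).
assert (HPsi : forall z, is_derive Psi z (phi z)).
{ intros z. apply is_derive_RInt with (a := 0).
  - apply filter_forall. intros b. apply RInt_correct, ex_RInt_damped_orbit.
  - apply continuous_damped_orbit. }
set (G := fun z => scal (exp (m * z)) (minus (Psi (c + z)) (Psi z))).
assert (HG : is_derive G 0
   (plus (scal (m * exp (m * 0)) (minus (Psi (c + 0)) (Psi 0)))
         (scal (exp (m * 0)) (minus (scal 1 (phi (c + 0))) (phi 0))))).
{ apply (is_derive_scal_fct (fun z => exp (m * z)) (fun z => minus (Psi (c + z)) (Psi z))).
  - auto_derive; [exact I | ring].
  - apply (@is_derive_minus R_AbsRing E); [| apply HPsi].
    apply (@is_derive_comp R_AbsRing E Psi (fun z => c + z)); [apply HPsi | auto_derive; reflexivity]. }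
assert (Hlim : plus (scal (m * exp (m * 0)) (minus (Psi (c + 0)) (Psi 0)))
                     (scal (exp (m * 0)) (minus (scal 1 (phi (c + 0))) (phi 0)))
              = plus (minus (scal (exp (- (m * c))) (U c x)) x) (scal m (damped_int U m c x))).
{ rewrite Rmult_0_r, exp_0, Rmult_1_r, !Rplus_0_r, !scal_R1.
  change (Psi c) with (damped_int U m c x). change (Psi 0) with (RInt phi 0 0).
  rewrite RInt_point, plus_comm. f_equal.
  - f_equal. unfold phi. rewrite Rmult_0_r, Ropp_0, exp_0, (opg_zero _ HU). apply scal_R1.
  - f_equal. exact (minus_zero_r _). }
rewrite <- Hlim. unfold gen.
eapply filterlim_ext; [| exact (is_derive_right_quotient G 0 _ HG)].
intros h. unfold G, Psi, phi. rewrite Rplus_0_l, <- !damped_int_shift, (opg_zero _ HU). reflexivity.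
Qed.

Lemma gen_orbit_int c x : gen E U (damped_int U 0 c x) (minus (U c x) x).
Proof.
assert (Hv : plus (minus (scal (exp (- (0 * c))) (U c x)) x) (scal 0 (damped_int U 0 c x))
             = minus (U c x) x).
{ rewrite Rmult_0_l, Ropp_0, exp_0, scal_R1, scal_R0. exact (plus_zero_r _). }
rewrite <- Hv. apply gen_damped_int.
Qed.

Lemma RInt_orbit_shift (L : E -> E) b c h :
  is_linear L -> RInt (fun t => L (U (b + t) h)) 0 c = L (U b (damped_int U 0 c h)).
Proof.
intros HL. rewrite damped_int_0.
transitivity (RInt (fun t => (fun v => L (U b v)) (U t h)) 0 c).
- apply RInt_ext. intros t _. simpl. rewrite (opg_add _ HU). reflexivity.
- apply (RInt_linear (fun v => L (U b v))).
  + apply (is_linear_comp (U b) L); [apply (opg_linear _ HU) | exact HL].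
  + apply ex_RInt_continuous. intros z _. apply (opg_cont _ HU).
Qed.

End Group.

Lemma cube_int_ext n c (F G : list R -> E) :
  (forall l, F l = G l) -> cube_int E n c F = cube_int E n c G.
Proof.
revert F G. induction n as [|n IH]; intros F G HFG; simpl.
- apply HFG.
- apply RInt_ext. intros t _. apply IH. intros l. apply HFG.
Qed.

Lemma cube_int_orbit U (L : E -> E) c g n b :
  one_param_group U -> is_linear L ->
  cube_int E n c (fun l => L (U (b + sumR l) g)) = L (U b (Nat.iter n (damped_int U 0 c) g)).
Proof.
intros HU HL. revert b. induction n as [|n IH]; intros b; simpl.
- rewrite Rplus_0_r. reflexivity.
- rewrite <- RInt_orbit_shift by assumption. apply RInt_ext. intros t _.
  rewrite <- IH. apply cube_int_ext. intros l. simpl. rewrite Rplus_assoc. reflexivity.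
Qed.

Lemma cube_int_two_orbits U1 U2 c f k n a :
  one_param_group U1 -> one_param_group U2 ->
  cube_int E (n + k) c (fun l => U1 (a + sumR (firstn n l)) (U2 (sumR (skipn n l)) f)) =
  U1 a (Nat.iter n (damped_int U1 0 c) (Nat.iter k (damped_int U2 0 c) f)).
Proof.
intros HU1 HU2. revert a. induction n as [|n IH]; intros a; simpl.
- rewrite <- (opg_zero _ HU2 (Nat.iter k _ f)).
  rewrite <- (cube_int_orbit U2 (U1 a) c f k 0 HU2 (opg_linear _ HU1 a)).
  apply cube_int_ext. intros l. simpl. rewrite Rplus_0_r, Rplus_0_l. reflexivity.
- rewrite <- (RInt_orbit_shift U1 HU1 (fun v => v)) by apply is_linear_id.
  apply RInt_ext. intros t _. rewrite <- IH. apply cube_int_ext. intros l.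
  simpl. rewrite Rplus_assoc. reflexivity.
Qed.

End OneParameterGroup.

Section AffineGroup.
Variable E : CompleteNormedModule R_AbsRing.
Variable T : R -> R -> E -> E.
Hypothesis HT : is_contr_rep E T.

Notation U1 := (T1 E T).
Notation U2 := (T2 E T).
Notation A2 := (gen E U2).

Lemma is_linear_T a b : 0 < a -> is_linear (T a b).
Proof.
intros Ha. destruct HT as [Hplus [Hscal [_ [_ [_ Hnorm]]]]].
split; [apply Hplus, Ha | apply Hscal, Ha |].
exists 1. split; [lra|]. intros f. rewrite Rmult_1_l. apply Hnorm, Ha.
Qed.

Lemma T_mul a1 b1 a2 b2 f : 0 < a1 -> 0 < a2 ->
  T a1 b1 (T a2 b2 f) = T (a1 * a2) (a1 * b2 + b1) f.
Proof. destruct HT as [_ [_ [_ [Hmul _]]]]. apply Hmul. Qed.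

Lemma T_1_0 f : T 1 0 f = f.
Proof. destruct HT as [_ [_ [Hid _]]]. apply Hid. Qed.

Lemma continuous_T f a b : 0 < a -> continuous (fun p : R * R => T (fst p) (snd p) f) (a, b).
Proof. destruct HT as [_ [_ [_ [_ [Hcont _]]]]]. apply Hcont. Qed.

Lemma norm_T1 u f : norm (U1 u f) <= norm f.
Proof. destruct HT as [_ [_ [_ [_ [_ Hnorm]]]]]. apply Hnorm, exp_pos. Qed.

Lemma T1_group : one_param_group E U1.
Proof.
split.
- intros t. apply is_linear_T, exp_pos.
- intros f. unfold T1. rewrite exp_0. apply T_1_0.
- intros s t f. unfold T1. rewrite T_mul by apply exp_pos. rewrite exp_plus. f_equal. ring.
- intros f t. unfold T1.
  apply (continuous_comp_2 exp (fun _ => 0) (fun a b => T a b f)).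
  + apply (ex_derive_continuous exp). auto_derive. exact I.
  + apply continuous_const.
  + apply continuous_T, exp_pos.
Qed.

Lemma T2_group : one_param_group E U2.
Proof.
split.
- intros t. apply is_linear_T. lra.
- intros f. apply T_1_0.
- intros s t f. unfold T2. rewrite T_mul by lra. f_equal; ring.
- intros f t. unfold T2.
  apply (continuous_comp_2 (fun _ => 1) (fun t => t) (fun a b => T a b f)).
  + apply continuous_const.
  + apply continuous_id.
  + apply continuous_T. lra.
Qed.

(* (1, z) (e^u, 0) = (e^u, 0) (1, e^(-u) z) in the ax+b group. *)
Lemma T2_T1 z u f : U2 z (U1 u f) = U1 u (U2 (exp (- u) * z) f).
Proof.
unfold T1, T2. rewrite !T_mul by (apply exp_pos || lra).
f_equal; [ring|]. rewrite <- Rmult_assoc, <- exp_plus, Rplus_opp_r, exp_0. ring.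
Qed.

Lemma diff_quot_T2_T1 z u f : z <> 0 ->
  diff_quot E U2 z (U1 u f) = U1 u (scal (exp (- u)) (diff_quot E U2 (exp (- u) * z) f)).
Proof.
intros Hz. unfold diff_quot.
assert (He : 0 < exp (- u)) by apply exp_pos.
rewrite T2_T1, <- (linear_minus _ _ _ (opg_linear _ _ T1_group u)), scal_assoc.
rewrite <- (linear_scal _ (opg_linear _ _ T1_group u)). do 2 f_equal.
change (/ z = exp (- u) * / (exp (- u) * z)). field. lra.
Qed.

Lemma gen2_T1 a x y : A2 x y -> A2 (U1 a x) (scal (exp (- a)) (U1 a y)).
Proof.
intros H. rewrite <- (linear_scal _ (opg_linear _ _ T1_group a)). unfold gen.
apply (filterlim_ext_loc (fun z => U1 a (scal (exp (- a)) (diff_quot E U2 (exp (- a) * z) x)))).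
- exists (mkposreal 1 Rlt_0_1). intros z _ Hz. symmetry. apply diff_quot_T2_T1. lra.
- apply (filterlim_comp _ _ _ (fun z => diff_quot E U2 (exp (- a) * z) x)
                                (fun v => U1 a (scal (exp (- a)) v)) _ (locally y)).
  + apply (filterlim_comp _ _ _ (fun z => exp (- a) * z) (fun s => diff_quot E U2 s x) _ (at_right 0));
      [apply filterlim_at_right_0_scale, exp_pos | exact H].
  + apply (@linear_cont R_AbsRing E E (fun v => U1 a (scal (exp (- a)) v)) y).
    apply (is_linear_comp (fun v => scal (exp (- a)) v) (U1 a)).
    * exact (@is_linear_scal_r R_AbsRing E _ Rmult_comm).
    * apply (opg_linear _ _ T1_group).
Qed.

Lemma diff_quot_T2_damped_orbit m u z x y : z <> 0 ->
  minus (diff_quot E U2 z (scal (exp (- (m * u))) (U1 u x)))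
        (scal (exp (- ((m + 1) * u))) (U1 u y)) =
  scal (exp (- (m * u)))
    (U1 u (scal (exp (- u)) (minus (diff_quot E U2 (exp (- u) * z) x) y))).
Proof.
intros Hz.
pose proof (opg_linear _ _ T1_group u) as HL1.
rewrite (linear_scal _ (is_linear_diff_quot _ _ _ (opg_linear _ _ T2_group z))),
  (diff_quot_T2_T1 _ _ _ Hz).
replace (exp (- ((m + 1) * u))) with (exp (- (m * u)) * exp (- u))
  by (rewrite <- exp_plus; f_equal; ring).
exact (minus_scal_linear (U1 u) _ _ _ _ HL1).
Qed.

Lemma norm_damped_T1_le m u v : 0 <= m -> 0 <= u ->
  norm (scal (exp (- (m * u))) (U1 u (scal (exp (- u)) v))) <= norm v.
Proof.
intros Hm Hu.
assert (Hem : exp (- (m * u)) <= 1).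
{ apply exp_le_1. rewrite <- Ropp_0. apply Ropp_le_contravar, Rmult_le_pos; lra. }
assert (Heu : exp (- u) <= 1) by (apply exp_le_1; lra).
pose proof (exp_pos (- (m * u))). pose proof (exp_pos (- u)). pose proof (norm_ge_0 v).
eapply Rle_trans; [apply (@norm_scal_nonneg E); lra|].
eapply Rle_trans; [apply Rmult_le_compat_l; [lra | apply norm_T1]|].
eapply Rle_trans; [apply Rmult_le_compat_l; [lra | apply (@norm_scal_nonneg E); lra]|].
apply Rle_trans with (1 * (1 * norm v)); [|lra].
apply Rmult_le_compat; try lra; [apply Rmult_le_pos; lra | apply Rmult_le_compat_r; lra].
Qed.

(* The difference quotients converge uniformly on [0, c], since A2 is sampled at the
   shorter step e^(-u) z there. *)
Lemma gen2_damped_int m c x y : 0 <= m -> 0 < c -> A2 x y ->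
  A2 (damped_int E U1 m c x) (damped_int E U1 (m + 1) c y).
Proof.
intros Hm Hc H. apply (proj2 (@filterlim_at_right_0P E _ _)). intros eps.
assert (Heps : 0 < eps / (2 * c)) by (apply Rdiv_lt_0_compat; [apply cond_pos | lra]).
destruct (proj1 (@filterlim_at_right_0P E _ _) H (mkposreal _ Heps)) as [eta Heta].
exists eta. intros z [Hz0 Hze].
set (g := fun u => minus (diff_quot E U2 z (scal (exp (- (m * u))) (U1 u x)))
                         (scal (exp (- ((m + 1) * u))) (U1 u y))).
assert (Hint : is_RInt g 0 c
                 (minus (diff_quot E U2 z (damped_int E U1 m c x)) (damped_int E U1 (m + 1) c y))).
{ apply (is_RInt_minus (fun u => diff_quot E U2 z (scal (exp (- (m * u))) (U1 u x)))).
  - apply (is_RInt_linear (diff_quot E U2 z)).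
    + exact (is_linear_diff_quot _ _ _ (opg_linear _ _ T2_group z)).
    + exact (RInt_correct _ 0 c (ex_RInt_damped_orbit _ _ T1_group m x 0 c)).
  - exact (RInt_correct _ 0 c (ex_RInt_damped_orbit _ _ T1_group (m + 1) y 0 c)). }
change (norm (minus (diff_quot E U2 z (damped_int E U1 m c x)) (damped_int E U1 (m + 1) c y)) < eps).
eapply Rle_lt_trans; [apply (norm_RInt_le_const g 0 c _ (eps / (2 * c))); [lra | | exact Hint]|].
- intros u Hu. unfold g. rewrite diff_quot_T2_damped_orbit by lra.
  eapply Rle_trans; [apply norm_damped_T1_le; lra|]. left. apply Heta.
  pose proof (exp_pos (- u)). assert (exp (- u) <= 1) by (apply exp_le_1; lra).
  split; [apply Rmult_lt_0_compat; lra|].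
  apply Rle_lt_trans with z; [|lra].
  rewrite <- (Rmult_1_l z) at 2. apply Rmult_le_compat_r; lra.
- replace ((c - 0) * (eps / (2 * c))) with (eps / 2) by (field; lra).
  destruct eps as [e He]. simpl. lra.
Qed.

Lemma genj_plus j f g f' g' :
  genj E T j f g -> genj E T j f' g' -> genj E T j (plus f f') (plus g g').
Proof.
intros H H'. destruct j; simpl in *; apply gen_plus; try assumption;
  apply opg_linear; [apply T2_group | apply T1_group].
Qed.

Lemma genj_scal j (k : R) f g : genj E T j f g -> genj E T j (scal k f) (scal k g).
Proof.
intros H. destruct j; simpl in *; apply gen_scal; try assumption;
  apply opg_linear; [apply T2_group | apply T1_group].
Qed.

Lemma applies_plus w x x' g g' :
  applies E T w x g -> applies E T w x' g' -> applies E T w (plus x x') (plus g g').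
Proof.
revert g g'. induction w as [|j w IH]; simpl; intros g g' Hg Hg'.
- subst. reflexivity.
- destruct Hg as [h [Hh Hj]], Hg' as [h' [Hh' Hj']].
  exists (plus h h'). split; [apply IH | apply genj_plus]; assumption.
Qed.

Lemma applies_scal w (k : R) x g : applies E T w x g -> applies E T w (scal k x) (scal k g).
Proof.
revert g. induction w as [|j w IH]; simpl; intros g Hg.
- subst. reflexivity.
- destruct Hg as [h [Hh Hj]]. exists (scal k h). split; [apply IH | apply genj_scal]; assumption.
Qed.

Lemma applies_T1 a w x g :
  applies E T w x g -> exists k : R, applies E T w (U1 a x) (scal k (U1 a g)).
Proof.
revert g. induction w as [|j w IH]; simpl; intros g Hg.
- subst. exists 1. rewrite scal_R1. reflexivity.
- destruct Hg as [h [Hh Hj]]. destruct (IH h Hh) as [k Hk]. destruct j; simpl in Hj.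
  + exists (k * exp (- a)). exists (scal k (U1 a h)). split; [exact Hk|].
    replace (scal (k * exp (- a)) (U1 a g)) with (scal k (scal (exp (- a)) (U1 a g)))
      by exact (scal_assoc _ _ _).
    apply gen_scal; [apply (opg_linear _ _ T2_group) | apply gen2_T1, Hj].
  + exists k. exists (scal k (U1 a h)). split; [exact Hk|].
    apply gen_scal; [apply (opg_linear _ _ T1_group)|].
    apply gen_linear_comm; [apply (opg_linear _ _ T1_group) | | exact Hj].
    exact (fun t v => opg_comm _ _ T1_group t a v).
Qed.

Lemma applies_T2 a w x g : count_occ bool_dec w false = 0%nat ->
  applies E T w x g -> applies E T w (U2 a x) (U2 a g).
Proof.
revert g. induction w as [|j w IH]; simpl; intros g Hw Hg.
- subst. reflexivity.
- destruct Hg as [h [Hh Hj]]. destruct j; simpl in Hw, Hj; [|discriminate].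
  exists (U2 a h). split; [apply IH; assumption|].
  apply gen_linear_comm; [apply (opg_linear _ _ T2_group) | | exact Hj].
  exact (fun t v => opg_comm _ _ T2_group t a v).
Qed.

Lemma applies_snoc w j x g :
  applies E T (w ++ j :: nil) x g <-> exists y, genj E T j x y /\ applies E T w y g.
Proof.
revert g. induction w as [|i w IH]; simpl; intros g.
- split; [intros [h [-> Hj]]; exists g; split; [exact Hj | reflexivity]|].
  intros [y [Hj ->]]. exists x. split; [reflexivity | exact Hj].
- split.
  + intros [h [Hh Hi]]. destruct (proj1 (IH h) Hh) as [y [Hj Hy]].
    exists y. split; [exact Hj|]. exists h. split; assumption.
  + intros [y [Hj [h [Hh Hi]]]]. exists h. split; [apply IH; exists y; split|]; assumption.
Qed.

Definition smooth (p q : nat) (x : E) : Prop :=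
  forall w, (count_occ bool_dec w false <= p)%nat -> (count_occ bool_dec w true <= q)%nat ->
    exists g, applies E T w x g.

Lemma smooth_0_0 x : smooth 0 0 x.
Proof.
intros [|[] w] Hf Ht; [exists x; reflexivity | simpl in Ht; lia | simpl in Hf; lia].
Qed.

Lemma smooth_plus p q x x' : smooth p q x -> smooth p q x' -> smooth p q (plus x x').
Proof.
intros H H' w Hf Ht. destruct (H w Hf Ht) as [g Hg], (H' w Hf Ht) as [g' Hg'].
exists (plus g g'). apply applies_plus; assumption.
Qed.

Lemma smooth_scal p q (k : R) x : smooth p q x -> smooth p q (scal k x).
Proof.
intros H w Hf Ht. destruct (H w Hf Ht) as [g Hg]. exists (scal k g). apply applies_scal, Hg.
Qed.

Lemma smooth_minus p q x x' : smooth p q x -> smooth p q x' -> smooth p q (minus x x').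
Proof.
intros H H'. replace (minus x x') with (plus x (scal (-1) x')).
- apply smooth_plus, smooth_scal; assumption.
- unfold minus. f_equal. exact (scal_opp_one x').
Qed.

Lemma smooth_T1 p q a x : smooth p q x -> smooth p q (U1 a x).
Proof.
intros H w Hf Ht. destruct (H w Hf Ht) as [g Hg]. destruct (applies_T1 a w x g Hg) as [k Hk].
exists (scal k (U1 a g)). exact Hk.
Qed.

(* T2(a) only commutes with A2; with A1 it would produce an extra A2 term. *)
Lemma smooth_T2 q a x : smooth 0 q x -> smooth 0 q (U2 a x).
Proof.
intros H w Hf Ht. destruct (H w Hf Ht) as [g Hg].
exists (U2 a g). apply applies_T2; [lia | exact Hg].
Qed.

Lemma smooth_A2 p q x : smooth p (S q) x -> exists y, A2 x y /\ smooth p q y.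
Proof.
intros H. destruct (H (true :: nil)) as [y [h [-> Hy]]]; simpl; [lia | lia |].
exists y. split; [exact Hy|]. intros w Hf Ht.
destruct (H (w ++ true :: nil)) as [g Hg]; rewrite ?count_occ_app; simpl; [lia | lia |].
destruct (proj1 (applies_snoc w true x g) Hg) as [y' [Hy' Hw]].
exists g. rewrite (gen_unique _ _ _ _ _ Hy Hy'). exact Hw.
Qed.

(* The damping exponent m is generalised because A2 raises it (gen2_damped_int). *)
Lemma smooth_damped_int_T1 m c p q x : 0 <= m -> 0 < c ->
  smooth p q x -> smooth (S p) q (damped_int E U1 m c x).
Proof.
intros Hm Hc Hx w. revert m p q x Hm Hx.
induction w as [|j w IH] using rev_ind; intros m p q x Hm Hx Hf Ht.
- exists (damped_int E U1 m c x). reflexivity.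
- rewrite count_occ_app in Hf, Ht. destruct j; simpl in Hf, Ht.
  + destruct q as [|q]; [lia|]. destruct (smooth_A2 _ _ _ Hx) as [y [Hy Hsy]].
    destruct (IH (m + 1) p q y) as [g Hg]; [lra | exact Hsy | lia | lia |].
    exists g. apply applies_snoc. exists (damped_int E U1 (m + 1) c y).
    split; [apply gen2_damped_int; assumption | exact Hg].
  + destruct (IH m p q x Hm Hx) as [g1 Hg1]; [lia | lia |].
    assert (Hv : smooth p q (minus (scal (exp (- (m * c))) (U1 c x)) x))
      by (apply smooth_minus, Hx; apply smooth_scal, smooth_T1, Hx).
    destruct (Hv w) as [g0 Hg0]; [lia | lia |].
    exists (plus g0 (scal m g1)). apply applies_snoc.
    exists (plus (minus (scal (exp (- (m * c))) (U1 c x)) x) (scal m (damped_int E U1 m c x))).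
    split; [apply gen_damped_int, T1_group|].
    apply applies_plus, applies_scal; assumption.
Qed.

Lemma smooth_orbit_int_T2 c q x : smooth 0 q x -> smooth 0 (S q) (damped_int E U2 0 c x).
Proof.
intros Hx w. induction w as [|j w _] using rev_ind; intros Hf Ht.
- exists (damped_int E U2 0 c x). reflexivity.
- rewrite count_occ_app in Hf, Ht. destruct j; simpl in Hf, Ht; [|lia].
  destruct (smooth_minus _ _ _ _ (smooth_T2 _ c _ Hx) Hx w) as [g Hg]; [lia | lia |].
  exists g. apply applies_snoc. exists (minus (U2 c x) x).
  split; [apply gen_orbit_int, T2_group | exact Hg].
Qed.

Lemma P_op_orbit_ints r s f :
  P_op E T r s f =
  scal (/ (s / INR r) ^ (2 * r))
    (Nat.iter r (damped_int E U1 0 (s / INR r)) (Nat.iter r (damped_int E U2 0 (s / INR r)) f)).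
Proof.
unfold P_op. f_equal. replace (2 * r)%nat with (r + r)%nat by lia.
rewrite <- (opg_zero _ _ T1_group (Nat.iter r _ _)).
rewrite <- (cube_int_two_orbits _ _ _ _ f r r 0 T1_group T2_group).
apply cube_int_ext. intros l. rewrite Rplus_0_l. reflexivity.
Qed.

End AffineGroup.

Theorem mainTheorem9 (E : CompleteNormedModule R_AbsRing) (T : R -> R -> E -> E)
  (HT : is_contr_rep E T) (r : nat) (hr : (1 <= r)%nat) (s : R) (hs : 0 < s) :
  forall f : E, in_Er E T r (P_op E T r s f).
Proof.
intros f.
set (c := s / INR r).
assert (Hc : 0 < c) by (apply Rdiv_lt_0_compat; [exact hs | apply lt_0_INR; lia]).
assert (Hsmooth2 : forall k, smooth E T 0 k (Nat.iter k (damped_int E (T2 E T) 0 c) f)).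
{ induction k as [|k IH]; [apply smooth_0_0 | apply (smooth_orbit_int_T2 E T HT), IH]. }
assert (Hsmooth1 : forall k, smooth E T k r
               (Nat.iter k (damped_int E (T1 E T) 0 c) (Nat.iter r (damped_int E (T2 E T) 0 c) f))).
{ induction k as [|k IH]; [apply Hsmooth2 | apply (smooth_damped_int_T1 E T HT); [lra | exact Hc | exact IH]]. }
intros w Hw1 Hw2. rewrite (P_op_orbit_ints E T HT).
apply (smooth_scal E T HT r r _ _ (Hsmooth1 r));
  (eapply Nat.le_trans; [apply count_occ_bound | exact Hw2]).
Qed.
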